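(* Let $I=\{i_1<i_2<\cdots<i_{2r}\}\subseteq[n]$ be a subset of even size. Then the word \[ \prod_{m=1}^{r} s_n\,(s_{n-2}s_{n-3}\cdots s_{i_{2m-1}})\,(s_{n-1}s_{n-2}\cdots s_{i_{2m}}) \] (where a run $s_a s_{a-1}\cdots s_b$ is empty if $a<b$) is a reduced expression for the unique element $w\in W$ of minimal length among all $u\in W$ with $\{i\in[n]: u(i)>n\}=I$; this $w$ is the minimal length representative of its right coset $W_{[n-1]}w$. Moreover, this word is a subword of $s_{i'_1}s_{i'_2}\cdots s_{i'_N}$, where the $m$-th factor is taken from the $m$-th group of blocks of that word.
   Context: The Weyl group $W$ of $\mathrm{SO}(2n)$ is the group of permutations $\sigma$ of $[2n]$ such that for each $i\in[n]$, $\sigma(n+i)\equiv n+\sigma(i)\pmod{2n}$ (with values in $[2n]$), and $|\{i\in[n]:\sigma(i)>n\}|$ is even; composition is $(\sigma\tau)(j)=\sigma(\tau(j))$. It is generated by $s_i=(i,i+1)(n+i,n+i+1)$ for $1\le i\le n-1$ and $s_n=(n,2n-1)(n-1,2n)$; length is with respect to these generators. $W_{[n-1]}=\langle s_1,\dots,s_{n-1}\rangle$. For $N=\binom n2$, $(i'_1,\dots,i'_N)$ is the sequence obtained by concatenating, for $m=1,\dots,\lfloor n/2\rfloor$ (the $m$-th group), the blocks ''$n$'', ''$n-2,n-3,\dots,2m-1$'', ''$n-1,n-2,\dots,2m$'' (empty runs if start $<$ end); $s_{i'_1}\cdots s_{i'_N}$ is a reduced word for the minimal coset representative of the longest eleme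nt. *)

(* Weyl group of SO(2n) (type D_n) acting on points 1..2n,
   elements represented as functions nat -> nat, compared on [1, 2n]. *)
From mathcomp Require Import all_boot.
Set Implicit Arguments. Unset Strict Implicit. Unset Printing Implicit Defensive.

Definition swap (a b j : nat) : nat :=
  if j == a then b else if j == b then a else j.

Definition sgen (n i : nat) : nat -> nat :=
  if i < n then swap i i.+1 \o swap (n + i) (n + i).+1
  else swap n (n.*2 - 1) \o swap (n - 1) n.*2.

Fixpoint wprod (n : nat) (w : seq nat) : nat -> nat :=
  if w is a :: w' then sgen n a \o wprod n w' else id.

Definition eqW (n : nat) (f g : nat -> nat) : Prop :=
  forall j, 0 < j <= n.*2 -> f j = g j.

Definition inW (n : nat) (s : nat -> nat) : Prop :=
  [/\ forall j, 0 < j <= n.*2 -> 0 < s j <= n.*2,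
      forall j k, 0 < j <= n.*2 -> 0 < k <= n.*2 -> s j = s k -> j = k,
      forall i, 0 < i <= n -> s (n + i) = n + s i %[mod n.*2]
    & ~~ odd (count (fun i => n < s i) (iota 1 n))].

Definition word_over (k : nat) (w : seq nat) : bool := all (fun i => 0 < i <= k) w.

Definition represents (n : nat) (w : seq nat) (s : nat -> nat) : Prop :=
  word_over n w /\ eqW n (wprod n w) s.

Definition has_length (n : nat) (s : nat -> nat) (k : nat) : Prop :=
  (exists2 w, represents n w s & size w = k) /\
  (forall w, represents n w s -> k <= size w).

Definition reduced (n : nat) (w : seq nat) : Prop :=
  word_over n w /\ has_length n (wprod n w) (size w).

Definition desc_set_is (n : nat) (s : nat -> nat) (I : seq nat) : Prop :=
  forall i, 0 < i <= n -> (n < s i) = (i \in I).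

Definition run (a b : nat) : seq nat := rev (iota b (a.+1 - b)).

(* i_k (1-based) for I = [:: i_1; ...; i_2r] *)
Definition iI (I : seq nat) (k : nat) : nat := nth 0 I k.-1.

Definition factorI (n : nat) (I : seq nat) (m : nat) : seq nat :=
  n :: run (n - 2) (iI I (m.*2 - 1)) ++ run (n - 1) (iI I m.*2).

Definition wordI (n : nat) (I : seq nat) : seq nat :=
  flatten [seq factorI n I m | m <- iota 1 (size I)./2].

(* m-th group of the word i'_1 ... i'_N *)
Definition groupD (n m : nat) : seq nat :=
  n :: run (n - 2) (m.*2 - 1) ++ run (n - 1) m.*2.

Definition longword (n : nat) : seq nat :=
  flatten [seq groupD n m | m <- iota 1 n./2].

From mathcomp Require Import all_boot zify.
Set Implicit Arguments. Unset Strict Implicit. Unset Printing Implicit Defensive.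

(* Through [key], W becomes the group of permutations of [1, 2n] commuting with
   [x |-> 2n+1-x], and its type D inversion number [inv_count] (a sum of
   [pair_inv] over position pairs [q < p <= n]) grows by at most one under a
   generator, since at most one pair of positions is affected; so it bounds
   the length from below. If the values of [u] exceeding [n] sit exactly at the
   positions in [I], every pair whose first position lies in [I] is inverted,
   whence [inv_count u >= sum_(q in I) (n - q) = size (wordI n I)]. In case of
   equality every pair contributes exactly its forced amount, and counting
   then determines [key (u p)] for each [p <= n]: [u] is the element computed
   by [wordI n I]. Left multiplication by [s_1, ..., s_(n-1)] does not change
   which values exceed [n], which gives the coset statement, and the subword
   claims hold because each run of [wordI n I] is a suffix of the matching run
   of the long word. *)

Ltac case_if := match goal with |- context [if ?b then _ else _] =>
  lazymatch b with
  | context [if _ then _ else _] => fail | true => fail | false => fail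
  | _ => let E := fresh "E" in case E: b => /=; try done end end.

Definition flip n j := if j <= n then j + n else j - n.

Lemma flip_range n j : 0 < j <= n.*2 -> 0 < flip n j <= n.*2.
Proof. rewrite /flip; case: ifP; lia. Qed.

Definition signed_perm n (u : nat -> nat) :=
  [/\ forall j, 0 < j <= n.*2 -> 0 < u j <= n.*2,
      forall j k, 0 < j <= n.*2 -> 0 < k <= n.*2 -> u j = u k -> j = k
    & forall j, 0 < j <= n.*2 -> u (flip n j) = flip n (u j)].

Lemma signed_perm_id n : signed_perm n id.
Proof. by split. Qed.

Lemma signed_perm_comp n u v :
  signed_perm n u -> signed_perm n v -> signed_perm n (u \o v).
Proof.
case=> u_range u_inj u_flip [v_range v_inj v_flip]; split=> /=.
- by move=> j /v_range /u_range.
- by move=> j k Hj Hk /(u_inj _ _ (v_range _ Hj) (v_range _ Hk)) /(v_inj _ _ Hj Hk).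
- by move=> j Hj; rewrite v_flip // u_flip // v_range.
Qed.

Lemma signed_perm_sgen n i : 1 < n -> 0 < i <= n -> signed_perm n (sgen n i).
Proof.
move=> Hn Hi; rewrite /signed_perm /sgen /flip /swap.
by split=> [j Hj|j k Hj Hk|j Hj]; case: ifP => H /=; repeat case: ifP; lia.
Qed.

Lemma signed_perm_wprod n w : 1 < n -> word_over n w -> signed_perm n (wprod n w).
Proof.
move=> Hn; elim: w => [|a w IHw] /=; first by move=> _; exact: signed_perm_id.
by case/andP=> Ha Hw; apply: signed_perm_comp; [exact: signed_perm_sgen | exact: IHw].
Qed.

(* [key] reverses [1, n] onto [n+1, 2n] and moves [n+1, 2n] down to [1, n]:
   it turns [flip] into the reflection [x |-> 2n+1-x], and [sgen n i] into
   [sgen_key n i], so that the type D inversions can be read off by comparing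
   keys. *)
Definition key n v := if v <= n then n.*2.+1 - v else v - n.

Definition sgen_key n i c :=
  if i < n then swap i i.+1 (swap (n.*2 - i) (n.*2 - i).+1 c)
  else swap n.+1 n.-1 (swap n.+2 n c).

Lemma key_range n v : 0 < v <= n.*2 -> 0 < key n v <= n.*2.
Proof. rewrite /key; case: ifP; lia. Qed.

Lemma key_inj n v w : 0 < v <= n.*2 -> 0 < w <= n.*2 -> key n v = key n w -> v = w.
Proof. rewrite /key; repeat case: ifP; lia. Qed.

Lemma key_flip n v : 0 < v <= n.*2 -> key n (flip n v) = n.*2.+1 - key n v.
Proof. rewrite /key /flip; repeat case: ifP; lia. Qed.

Lemma key_le n v : 0 < v <= n.*2 -> (key n v <= n) = (n < v).
Proof. rewrite /key; case: ifP => H1 H2; apply/idP/idP; lia. Qed.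

Lemma key_sgen n i v : 1 < n -> 0 < i <= n -> 0 < v <= n.*2 ->
  key n (sgen n i v) = sgen_key n i (key n v).
Proof.
move=> Hn Hi Hv; rewrite /sgen /sgen_key.
by case: ifP => H; rewrite /= /key /swap; repeat case: ifP; lia.
Qed.

(* The pair of positions [q < p] with keys [x, y] is inverted once for
   [x < y] and once more for [x < 2n+1-y]. *)
Definition pair_inv n x y :=
  (if x < y then 1 else 0) + (if x + y < n.*2.+1 then 1 else 0).

Definition same_pair (a b x y : nat) := (a = x /\ b = y) \/ (a = y /\ b = x).

(* The only key pairs whose [pair_inv] can grow under [sgen_key n i]. *)
Definition raising_pair n i a b :=
  (i < n /\ (same_pair a b i i.+1 \/ same_pair a b (n.*2 - i) (n.*2 - i).+1 \/
             same_pair a b i (n.*2 - i) \/ same_pair a b i.+1 (n.*2 - i).+1)) \/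
  (i = n /\ (same_pair a b n.+1 n.+2 \/ same_pair a b n n.+2 \/ same_pair a b n.-1 n.+1)).

Section PairInversions.
Variables (n i a b : nat).
Hypotheses (Hn : 1 < n) (Hi : 0 < i <= n) (Ha : 0 < a <= n.*2) (Hb : 0 < b <= n.*2)
  (neq_ab : a <> b) (nomirror_ab : a + b <> n.*2.+1).

Lemma pair_inv_sgen_key :
  pair_inv n (sgen_key n i a) (sgen_key n i b) <= pair_inv n a b + 1.
Proof. by rewrite /pair_inv /sgen_key /swap; repeat case_if; lia. Qed.

Ltac solve_same_pair := first [left; split; lia | right; split; lia].
Ltac solve_raising_pair :=
  first [ left; split; [lia|]; first [ left; solve_same_pair
                                     | right; left; solve_same_pair
                                     | right; right; left; solve_same_pair
                                     | right; right; right; solve_same_pair]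
        | right; split; [lia|]; first [ left; solve_same_pair
                                      | right; left; solve_same_pair
                                      | right; right; solve_same_pair]].

Lemma raising_pair_of_lt :
  pair_inv n a b < pair_inv n (sgen_key n i a) (sgen_key n i b) -> raising_pair n i a b.
Proof.
rewrite /pair_inv /sgen_key /swap; repeat case_if.
all: by move=> Hlt; first [exfalso; lia | solve_raising_pair].
Qed.

End PairInversions.

Lemma raising_pair_unique n i a b a' b' : 1 < n -> 0 < i <= n ->
  raising_pair n i a b -> raising_pair n i a' b' ->
  a + b <> n.*2.+1 -> a + a' <> n.*2.+1 -> a + b' <> n.*2.+1 ->
  b + a' <> n.*2.+1 -> b + b' <> n.*2.+1 -> a' + b' <> n.*2.+1 ->
  same_pair a b a' b'.
Proof.
move=> Hn Hi R R' *; rewrite /raising_pair /same_pair in R R' *.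
repeat match goal with H : _ \/ _ |- _ => destruct H | H : _ /\ _ |- _ => destruct H end.
all: by subst; first [left; split; lia | right; split; lia | exfalso; lia].
Qed.

Definition inc_pairs n := [seq (q, p) | q <- iota 1 n, p <- iota q.+1 (n - q)].

Definition inv_count n (u : nat -> nat) :=
  \sum_(qp <- inc_pairs n) pair_inv n (key n (u qp.1)) (key n (u qp.2)).

Lemma mem_inc_pairs n q p : ((q, p) \in inc_pairs n) = (0 < q < p) && (p <= n).
Proof.
apply/allpairsPdep/idP.
- by case=> x [y] [Hx Hy [-> ->]]; move: Hx Hy; rewrite !mem_iota; lia.
- by move=> H; exists q, p; rewrite !mem_iota; split=> //; lia.
Qed.

Lemma inc_pairs_uniq n : uniq (inc_pairs n).
Proof.
apply: allpairs_uniq_dep; first exact: iota_uniq.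
- by move=> x _; exact: iota_uniq.
- by move=> [x y] [x' y'] _ _ /= [-> ->].
Qed.

Lemma sum_le_add1 (T : eqType) (r : seq T) (F G : T -> nat) : uniq r ->
  {in r, forall x, G x <= F x + 1} ->
  {in r &, forall x y, F x < G x -> F y < G y -> x = y} ->
  \sum_(x <- r) G x <= \sum_(x <- r) F x + 1.
Proof.
elim: r => [|a r IHr] /=; first by rewrite !big_nil.
case/andP=> a_notin_r r_uniq G_le G_lt_unique; rewrite !big_cons.
have [Fa_lt_Ga|Ga_le_Fa] := ltnP (F a) (G a).
- suff: \sum_(x <- r) G x <= \sum_(x <- r) F x by have := G_le a (mem_head _ _); lia.
  rewrite big_seq [leqRHS]big_seq; apply: leq_sum => x x_in_r; rewrite leqNgt.
  apply/negP => /(G_lt_unique a x (mem_head _ _) _ Fa_lt_Ga) eq_ax.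
  by move: a_notin_r; rewrite eq_ax ?x_in_r // inE x_in_r orbT.
- suff: \sum_(x <- r) G x <= \sum_(x <- r) F x + 1 by lia.
  apply: IHr => // [x Hx|x y Hx Hy]; first by apply: G_le; rewrite inE Hx orbT.
  by apply: G_lt_unique; rewrite inE ?Hx ?Hy orbT.
Qed.

Lemma signed_perm_key_inj n u q p : signed_perm n u -> 0 < q <= n.*2 -> 0 < p <= n.*2 ->
  key n (u q) = key n (u p) -> q = p.
Proof. by case=> u_range u_inj _ Hq Hp /(key_inj (u_range _ Hq) (u_range _ Hp)); exact: u_inj. Qed.

Lemma signed_perm_key_nomirror n u q p : signed_perm n u -> 0 < q <= n -> 0 < p <= n ->
  key n (u q) + key n (u p) <> n.*2.+1.
Proof.
move=> Hu Hq Hp E; have [u_range _ u_flip] := Hu.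
have Hq2 : 0 < q <= n.*2 by lia.
have /signed_perm_key_inj : key n (u p) = key n (u (flip n q)).
  rewrite u_flip // key_flip; last exact: u_range.
  by have := key_range (u_range _ Hq2); lia.
move=> /(_ Hu ltac:(lia) (flip_range Hq2)); rewrite /flip; case: ifP; lia.
Qed.

Section GeneratorStep.
Variables (n i : nat) (u : nat -> nat).
Hypotheses (Hn : 1 < n) (Hi : 0 < i <= n) (Hu : signed_perm n u).

Local Notation k j := (key n (u j)).

Let key_u_range j : 0 < j <= n -> 0 < k j <= n.*2.
Proof. by case: Hu => u_range _ _ Hj; apply/key_range/u_range; lia. Qed.

Let key_u_inj j j' : 0 < j <= n -> 0 < j' <= n -> k j = k j' -> j = j'.
Proof. by move=> Hj Hj' /(signed_perm_key_inj Hu); apply; lia. Qed.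

Let key_u_nomirror j j' : 0 < j <= n -> 0 < j' <= n -> k j + k j' <> n.*2.+1.
Proof. exact: signed_perm_key_nomirror. Qed.

Lemma pair_inv_sgen q p : 0 < q < p -> p <= n ->
  pair_inv n (sgen_key n i (k q)) (sgen_key n i (k p)) <= pair_inv n (k q) (k p) + 1.
Proof.
move=> Hqp Hp; apply: pair_inv_sgen_key; rewrite ?key_u_range //; try lia.
- by move/key_u_inj; lia.
- by apply: key_u_nomirror; lia.
Qed.

Lemma raising_pair_sgen q p : 0 < q < p -> p <= n ->
  pair_inv n (k q) (k p) < pair_inv n (sgen_key n i (k q)) (sgen_key n i (k p)) ->
  raising_pair n i (k q) (k p).
Proof.
move=> Hqp Hp; apply: raising_pair_of_lt; rewrite ?key_u_range //; try lia.
- by move/key_u_inj; lia.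
- by apply: key_u_nomirror; lia.
Qed.

Lemma raised_pair_unique q p q' p' : 0 < q < p -> p <= n -> 0 < q' < p' -> p' <= n ->
  raising_pair n i (k q) (k p) -> raising_pair n i (k q') (k p') -> (q, p) = (q', p').
Proof.
move=> Hqp Hp Hqp' Hp' R R'.
have NM j j' : 0 < j <= n -> 0 < j' <= n -> k j + k j' <> n.*2.+1 by exact: key_u_nomirror.
have := raising_pair_unique Hn Hi R R' (NM q p ltac:(lia) ltac:(lia))
  (NM q q' ltac:(lia) ltac:(lia)) (NM q p' ltac:(lia) ltac:(lia))
  (NM p q' ltac:(lia) ltac:(lia)) (NM p p' ltac:(lia) ltac:(lia))
  (NM q' p' ltac:(lia) ltac:(lia)).
case=> [[E1 E2]|[E1 E2]].
- have -> : q = q' by apply: key_u_inj E1; lia.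
  by have -> : p = p' by apply: key_u_inj E2; lia.
- have Eq : q = p' by apply: key_u_inj E1; lia.
  have Ep : p = q' by apply: key_u_inj E2; lia.
  lia.
Qed.

Lemma inv_count_sgen : inv_count n (sgen n i \o u) <= inv_count n u + 1.
Proof.
have [u_range _ _] := Hu.
have key_sgen_u j : 0 < j <= n -> key n (sgen n i (u j)) = sgen_key n i (k j).
  by move=> Hj; rewrite key_sgen //; apply: u_range; lia.
rewrite /inv_count; apply: sum_le_add1; first exact: inc_pairs_uniq.
- move=> [q p]; rewrite mem_inc_pairs /= => /andP [Hqp Hp].
  by rewrite !key_sgen_u; [exact: pair_inv_sgen | lia | lia].
- move=> [q p] [q' p']; rewrite !mem_inc_pairs /= => /andP [Hqp Hp] /andP [Hqp' Hp'].
  rewrite !key_sgen_u; try lia.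
  move=> /raising_pair_sgen R /raising_pair_sgen R'.
  exact: raised_pair_unique (R _ _) (R' _ _).
Qed.

End GeneratorStep.

Lemma inv_count_id n : inv_count n id = 0.
Proof.
rewrite /inv_count big_seq big1 // => [[q p]].
by rewrite mem_inc_pairs /pair_inv /key /= => H; repeat case_if; lia.
Qed.

Lemma inv_count_wprod n w : 1 < n -> word_over n w -> inv_count n (wprod n w) <= size w.
Proof.
move=> Hn; elim: w => [|a w IHw] /=; first by rewrite inv_count_id.
case/andP=> Ha Hw; have := inv_count_sgen Hn Ha (signed_perm_wprod Hn Hw).
by have := IHw Hw; lia.
Qed.

Definition desc_weight n (I : seq nat) := \sum_(q <- I) (n - q).

Lemma perm_filter_iota n (I : seq nat) : uniq I -> all (fun i => 0 < i <= n) I ->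
  perm_eq (filter (mem I) (iota 1 n)) I.
Proof.
move=> HU HA; apply: uniq_perm; [by rewrite filter_uniq // iota_uniq | done |].
move=> x; rewrite mem_filter mem_iota; apply/andP/idP => [[//]|Hx]; split=> //.
by move/allP: HA => /(_ x Hx); lia.
Qed.

Lemma sum_inc_pairs_fst_in n (I : seq nat) : uniq I -> all (fun i => 0 < i <= n) I ->
  \sum_(qp <- inc_pairs n) (if qp.1 \in I then 1 else 0) = desc_weight n I.
Proof.
move=> HU HA; rewrite /inc_pairs big_allpairs_dep /=.
under eq_bigr => q _ do rewrite big_const_seq count_predT size_iota iter_addn_0.
rewrite /desc_weight -(perm_big _ (perm_filter_iota HU HA)) big_filter [RHS]big_mkcond /=.
by apply: eq_bigr => q _; case: ifP; rewrite ?mul0n ?mul1n.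
Qed.

Lemma uniq_size_le_interval (s : seq nat) a b : uniq s -> {in s, forall x, a <= x < b} ->
  size s <= b - a.
Proof.
move=> s_uniq s_in; rewrite -(size_iota a (b - a)); apply: uniq_leq_size => // x Hx.
by rewrite mem_iota; have := s_in x Hx; lia.
Qed.

Lemma eq_in_of_sum_leq (T : eqType) (r : seq T) (F G : T -> nat) :
  {in r, forall x, F x <= G x} -> \sum_(x <- r) G x <= \sum_(x <- r) F x ->
  {in r, forall x, G x = F x}.
Proof.
elim: r => [|a r IHr] //= F_le_G; rewrite !big_cons => sum_le x.
have F_le_G_r : {in r, forall x, F x <= G x} by move=> y Hy; apply: F_le_G; rewrite inE Hy orbT.
have sum_r_le : \sum_(y <- r) F y <= \sum_(y <- r) G y.
  by rewrite big_seq [leqRHS]big_seq; apply: leq_sum => y /F_le_G_r.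
have := F_le_G a (mem_head _ _); rewrite inE => Fa_le /orP [/eqP ->|Hx]; first lia.
by apply: IHr => //; lia.
Qed.

Section KeyByCounting.
Variables (n lo p : nat) (K : nat -> nat) (P : pred nat).
Hypotheses
  (K_inj : forall j j', 0 < j <= n.*2 -> 0 < j' <= n.*2 -> K j = K j' -> j = j')
  (K_range : forall j, 0 < j <= n -> P j -> lo <= K j < lo + n)
  (K_range_shift : forall j, 0 < j <= n -> ~~ P j -> lo <= K (j + n) < lo + n)
  (K_decr : forall q p, 0 < q < p -> p <= n -> P q -> P p -> K p < K q)
  (K_shift_lt : forall q p, 0 < q <= n -> 0 < p <= n -> P q -> ~~ P p -> K (p + n) < K q)
  (Hp : 0 < p <= n) (Pp : P p).

(* The [n] distinct keys [K j] ([j] in [P]) and [K (j + n)] ([j] not in [P])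
   fill the window [[lo, lo + n)], and those above [K p] are exactly the keys
   of the members of [P] before [p]. *)
Let above := map K (filter P (iota 1 p.-1)).
Let below := map K (filter P (iota p (n - p.-1)) ++ map (addn^~ n) (filter (predC P) (iota 1 n))).

Let size_above : size above <= lo + n - (K p).+1.
Proof.
apply: uniq_size_le_interval.
- rewrite map_inj_in_uniq ?filter_uniq ?iota_uniq // => x y.
  by rewrite !mem_filter !mem_iota => /andP [_ Hx] /andP [_ Hy]; apply: K_inj; lia.
- move=> y /mapP [x]; rewrite mem_filter mem_iota => /andP [Px Hx] ->.
  by have := @K_decr x p ltac:(lia) ltac:(lia) Px Pp; have := @K_range x ltac:(lia) Px; lia.
Qed.

Let size_below : size below <= (K p).+1 - lo.
Proof.
apply: uniq_size_le_interval.
- rewrite map_inj_in_uniq.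
  + rewrite cat_uniq filter_uniq ?iota_uniq ?map_inj_uniq ?filter_uniq ?iota_uniq //=;
      last exact: addIn.
    rewrite andbT; apply/hasPn => y /mapP [x]; rewrite !mem_filter !mem_iota => /andP [_ Hx] ->.
    lia.
  + move=> x y Hx Hy; apply: K_inj; [move: Hx|move: Hy];
    rewrite mem_cat => /orP [|/mapP [z]]; rewrite ?mem_filter ?mem_iota;
    try (move=> /andP[_ ?]; lia); move=> /andP[_ ?] ->; lia.
- move=> y /mapP [x Hx0 ->]; move: Hx0.
  rewrite mem_cat mem_filter mem_iota => /orP [/andP [Px Hx]|].
  + have := @K_range x ltac:(lia) Px; have := @K_range p ltac:(lia) Pp.
    case: (ltngtP p x) => H; last by subst; lia.
    * by have := @K_decr p x ltac:(lia) ltac:(lia) Pp Px; lia.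
    * lia.
  + move/mapP => [z]; rewrite mem_filter mem_iota /= => /andP [Pz Hz] ->.
    have nPz : ~~ P z by [].
    by have := @K_range_shift z ltac:(lia) nPz; have := @K_shift_lt p z ltac:(lia) ltac:(lia) Pp nPz; lia.
Qed.

Let size_above_below : size above + size below = n.
Proof.
rewrite /above /below !size_map size_cat size_map !size_filter.
have E : iota 1 n = iota 1 p.-1 ++ iota (1 + p.-1) (n - p.-1) by rewrite -iotaD; congr iota; lia.
have := count_predC P (iota 1 n); rewrite size_iota {1}E count_cat.
have -> : 1 + p.-1 = p by lia.
lia.
Qed.

Lemma key_by_count : K p = lo + n - 1 - count P (iota 1 p.-1).
Proof.
have := size_above; have := size_below; have := size_above_below.
by have := @K_range p ltac:(lia) Pp; rewrite /above size_map size_filter; lia.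
Qed.

End KeyByCounting.

Definition canon_key n (I : seq nat) p :=
  if p \in I then n - count (fun j => j \in I) (iota 1 p.-1)
  else n.*2 - count (fun j => j \notin I) (iota 1 p.-1).

Section MinimalInversions.
Variables (n : nat) (u : nat -> nat) (I : seq nat).
Hypotheses (Hu : signed_perm n u) (Hd : desc_set_is n u I) (HU : uniq I)
  (HA : all (fun i => 0 < i <= n) I).

Local Notation K j := (key n (u j)).

Lemma key_u_le_n j : 0 < j <= n -> (K j <= n) = (j \in I).
Proof. by move=> Hj; rewrite key_le ?Hd //; case: Hu => u_range _ _; apply: u_range; lia. Qed.

Lemma key_u_shift j : 0 < j <= n -> K (j + n) = n.*2.+1 - K j.
Proof.
move=> Hj; have [u_range _ u_flip] := Hu.
have -> : j + n = flip n j by rewrite /flip; case: ifP; lia.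
by rewrite u_flip ?key_flip //; [apply: u_range|]; lia.
Qed.

Lemma pair_inv_ge q p : 0 < q < p -> p <= n ->
  (if q \in I then 1 else 0) <= pair_inv n (K q) (K p).
Proof.
move=> Hqp Hp; have := key_u_le_n (j := q) ltac:(lia); have := key_u_le_n (j := p) ltac:(lia).
by rewrite /pair_inv; case: (q \in I); case: (p \in I); repeat case_if; lia.
Qed.

Lemma inv_count_ge : desc_weight n I <= inv_count n u.
Proof.
rewrite -sum_inc_pairs_fst_in // /inv_count big_seq [leqRHS]big_seq.
by apply: leq_sum => [[q p]]; rewrite mem_inc_pairs /= => H; apply: pair_inv_ge; lia.
Qed.

Hypothesis inv_count_le : inv_count n u <= desc_weight n I.

Lemma pair_inv_eq q p : 0 < q < p -> p <= n ->
  pair_inv n (K q) (K p) = if q \in I then 1 else 0.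
Proof.
move=> Hqp Hp.
have := @eq_in_of_sum_leq _ (inc_pairs n) (fun qp => if qp.1 \in I then 1 else 0)
  (fun qp => pair_inv n (K qp.1) (K qp.2)).
move=> /(_ _ _ (q, p)) /=; apply.
- by move=> [x y]; rewrite mem_inc_pairs /= => H; apply: pair_inv_ge; lia.
- by rewrite sum_inc_pairs_fst_in.
- by rewrite mem_inc_pairs; lia.
Qed.

Let key_u_inj j j' : 0 < j <= n.*2 -> 0 < j' <= n.*2 -> K j = K j' -> j = j'.
Proof. exact: signed_perm_key_inj. Qed.

Let key_u_range j : 0 < j <= n.*2 -> 0 < K j <= n.*2.
Proof. by move=> Hj; apply: key_range; case: Hu => u_range _ _; exact: u_range. Qed.

Lemma key_u_cross q p : 0 < q <= n -> 0 < p <= n -> q \in I -> p \notin I ->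
  n.*2.+1 < K q + K p.
Proof.
move=> Hq Hp Iq Ip.
have := key_u_le_n Hq; have := key_u_le_n Hp; rewrite Iq (negbTE Ip).
have := signed_perm_key_nomirror Hu Hq Hp.
have := key_u_range (j := q) ltac:(lia); have := key_u_range (j := p) ltac:(lia).
case: (ltngtP q p) => H; last by subst; rewrite Iq in Ip.
- have := pair_inv_eq (q := q) (p := p) ltac:(lia) ltac:(lia).
  by rewrite Iq /pair_inv; repeat case_if; lia.
- have := pair_inv_eq (q := p) (p := q) ltac:(lia) ltac:(lia).
  by rewrite (negbTE Ip) /pair_inv; repeat case_if; lia.
Qed.

Lemma key_u_canon_in p : 0 < p <= n -> p \in I ->
  K p = n - count (fun j => j \in I) (iota 1 p.-1).
Proof.
move=> Hp Ip; have := @key_by_count n 1 p (fun j => K j) (fun j => j \in I) key_u_inj.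
have -> : 1 + n - 1 = n by lia.
apply=> //.
- move=> j Hj /= Ij.
  by have := key_u_le_n Hj; have := key_u_range (j := j) ltac:(lia); rewrite Ij; lia.
- move=> j Hj /= Ij.
  rewrite key_u_shift //; have := key_u_le_n Hj; have := key_u_range (j := j) ltac:(lia).
  by rewrite (negbTE Ij); lia.
- move=> q p' Hqp' Hp' /= Iq Ip'.
  have := pair_inv_eq Hqp' Hp'; rewrite Iq /pair_inv.
  have := key_u_le_n (j := q) ltac:(lia); have := key_u_le_n (j := p') ltac:(lia).
  rewrite Iq Ip'; have := key_u_inj (j := q) (j' := p') ltac:(lia) ltac:(lia).
  by repeat case_if; lia.
- move=> q p' Hq Hp' /= Iq Ip'.
  rewrite key_u_shift //; have := key_u_cross Hq Hp' Iq Ip'.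
  by have := key_u_range (j := p') ltac:(lia); lia.
Qed.

Lemma key_u_canon_notin p : 0 < p <= n -> p \notin I ->
  K p = n.*2 - count (fun j => j \notin I) (iota 1 p.-1).
Proof.
move=> Hp Ip; have := @key_by_count n n.+1 p (fun j => K j) (fun j => j \notin I) key_u_inj.
have -> : n.+1 + n - 1 = n.*2 by lia.
apply=> //.
- move=> j Hj /= Ij.
  by have := key_u_le_n Hj; have := key_u_range (j := j) ltac:(lia); rewrite (negbTE Ij); lia.
- move=> j Hj /=; rewrite negbK key_u_shift // => Ij; have := key_u_le_n Hj.
  by have := key_u_range (j := j) ltac:(lia); rewrite Ij; lia.
- move=> q p' Hqp' Hp' /= Iq Ip'.
  have := pair_inv_eq Hqp' Hp'; rewrite (negbTE Iq) /pair_inv.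
  have := key_u_inj (j := q) (j' := p') ltac:(lia) ltac:(lia).
  by repeat case_if; lia.
- move=> q p' Hq Hp' /= Iq; rewrite negbK key_u_shift // => Ip'.
  have := key_u_cross Hp' Hq Ip' Iq; have := key_u_range (j := p') ltac:(lia).
  by have := key_u_range (j := q) ltac:(lia); lia.
Qed.

Lemma key_u_canon p : 0 < p <= n -> K p = canon_key n I p.
Proof.
move=> Hp; rewrite /canon_key; case: ifP => Ip.
- exact: key_u_canon_in.
- by apply: key_u_canon_notin; rewrite ?Ip.
Qed.

End MinimalInversions.

Lemma even_seq_ind (T : Type) (P : seq T -> Prop) :
  P [::] -> (forall a b s, P s -> P [:: a, b & s]) ->
  forall s, ~~ odd (size s) -> P s.
Proof.
move=> P0 Pcons s; have [k] := ubnP (size s).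
elim: k s => // k IHk [|a [|b s]] //= lt_size odd_s.
by apply/Pcons/IHk => //; [lia | move: odd_s; rewrite negbK].
Qed.

Lemma wprod_cat n x y j : wprod n (x ++ y) j = wprod n x (wprod n y j).
Proof. by elim: x => [|a x IHx] //=; rewrite IHx. Qed.

Lemma size_run a b : size (run a b) = a.+1 - b.
Proof. by rewrite /run size_rev size_iota. Qed.

Lemma word_over_run k a b : 0 < b -> a <= k -> word_over k (run a b).
Proof. by move=> Hb Ha; apply/allP => x; rewrite /run mem_rev mem_iota; lia. Qed.

Definition run_perm b d y :=
  if y < b then y else if y == b then b + d else if y <= b + d then y.-1 else y.

Lemma wprod_rev_iota n b d y : 0 < b -> b + d <= n -> 0 < y <= n ->
  wprod n (rev (iota b d)) y = run_perm b d y.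
Proof.
move=> Hb; elim: d => [|d IHd] Hd Hy; first by rewrite /run_perm /=; repeat case_if; lia.
rewrite -addn1 iotaD rev_cat /= IHd //; last lia.
by rewrite /sgen /run_perm /swap; repeat case_if; lia.
Qed.

Definition factor n a b := n :: run (n - 2) a ++ run (n - 1) b.

Definition factor_perm n a b y :=
  if y < a then y else if y == a then n.*2 else if y < b then y.-1
  else if y == b then n.*2 - 1 else y - 2.

Lemma wprod_factor n a b y : 1 < n -> 0 < a < b -> b <= n -> 0 < y <= n ->
  wprod n (factor n a b) y = factor_perm n a b y.
Proof.
move=> Hn Hab Hb Hy; rewrite /factor /= wprod_cat /run.
rewrite (@wprod_rev_iota n b) //; try lia.
rewrite (@wprod_rev_iota n a); try lia; last by rewrite /run_perm; repeat case_if; lia.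
by rewrite /sgen /run_perm /factor_perm /swap; repeat case_if; lia.
Qed.

Lemma word_over_factor n a b : 1 < n -> 0 < a -> 0 < b -> word_over n (factor n a b).
Proof.
move=> Hn Ha Hb; rewrite /word_over /= all_cat -!/(word_over _ _).
by rewrite !word_over_run //; lia.
Qed.

Lemma wordI_cons n a b s : wordI n [:: a, b & s] = factor n a b ++ wordI n s.
Proof.
rewrite /wordI /=; congr (_ :: _ ++ _).
rewrite -[2]/(1 + 1) (iotaDl 1 1) -map_comp; congr flatten.
apply/eq_in_map => m; rewrite mem_iota => Hm /=; rewrite /factorI /iI.
have -> : ((1 + m).*2 - 1).-1 = ((m.*2 - 1).-1).+2 by lia.
by have -> : ((1 + m).*2).-1 = ((m.*2).-1).+2 by lia.
Qed.

Definition canon_val n (I : seq nat) p :=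
  let c := count (fun q => q < p) I in if p \in I then n.*2 - c else p - c.

Lemma count_lt_le (s : seq nat) b p : sorted ltn s -> all (fun x => b < x) s ->
  count (fun q => q < p) s <= p - b.+1.
Proof.
move=> s_sorted s_gt; rewrite -size_filter; apply: uniq_size_le_interval.
- by rewrite filter_uniq // (sorted_uniq ltn_trans ltnn).
- by move=> x; rewrite mem_filter => /andP [x_lt /(allP s_gt)]; lia.
Qed.

Lemma wprod_factor_canon_val n a b s p : 1 < n -> 0 < a < b -> path ltn b s ->
  all (fun i => 0 < i <= n) [:: a, b & s] -> 0 < p <= n ->
  wprod n (factor n a b) (canon_val n s p) = canon_val n [:: a, b & s] p.
Proof.
move=> Hn Hab b_s /and3P [Ha Hb s_range] Hp.
have s_sorted := path_sorted b_s.
have s_gt_b : all (fun x => b < x) s := order_path_min ltn_trans b_s.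
have count_le := count_lt_le p s_sorted s_gt_b.
have factor_val y : 0 < y <= n -> wprod n (factor n a b) y = factor_perm n a b y.
  by move=> Hy; apply: wprod_factor => //; lia.
have [_ _ factor_flip] := signed_perm_wprod Hn (@word_over_factor n a b Hn ltac:(lia) ltac:(lia)).
rewrite /canon_val !inE; case: (boolP (p \in s)) => p_in_s.
- have Hpb : b < p by move/allP: s_gt_b => /(_ p p_in_s).
  have -> : n.*2 - count (fun q => q < p) s = flip n (n - count (fun q => q < p) s).
    by rewrite /flip; case: ifP; lia.
  rewrite factor_flip ?factor_val; try lia.
  by rewrite /factor_perm /flip orbT /=; repeat case_if; lia.
- rewrite orbF factor_val; last lia.
  by rewrite /factor_perm /=; repeat case_if; lia.
Qed.

Lemma eqW_of_signed_perm n u v : signed_perm n u -> signed_perm n v ->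
  (forall p, 0 < p <= n -> u p = v p) -> eqW n u v.
Proof.
case=> _ _ u_flip [_ _ v_flip] eq_uv j Hj; case: (leqP j n) => Hjn; first by apply: eq_uv; lia.
have -> : j = flip n (j - n) by rewrite /flip; case: ifP; lia.
by rewrite u_flip ?v_flip ?eq_uv //; lia.
Qed.

Section CanonicalElement.
Variables (n : nat) (I : seq nat).
Hypotheses (Hn : 1 < n) (I_sorted : sorted ltn I) (I_range : all (fun i => 0 < i <= n) I)
  (I_even : ~~ odd (size I)).

Local Notation w := (wprod n (wordI n I)).

Let I_uniq : uniq I.
Proof. by rewrite (sorted_uniq ltn_trans ltnn). Qed.

Lemma word_over_wordI : word_over n (wordI n I).
Proof.
elim/even_seq_ind: I I_sorted I_range I_even => // a b s IHs /andP [Hab b_s].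
move=> /and3P [Ha Hb s_range]; rewrite [odd _]/= negbK => s_even.
rewrite wordI_cons /word_over all_cat -!/(word_over _ _) word_over_factor ?IHs //; try lia.
exact: path_sorted b_s.
Qed.

Lemma size_wordI : size (wordI n I) = desc_weight n I.
Proof.
elim/even_seq_ind: I I_sorted I_range I_even => //; first by rewrite /desc_weight big_nil.
move=> a b s IHs /andP [Hab b_s] /and3P [Ha Hb s_range].
rewrite [odd _]/= negbK => s_even.
rewrite wordI_cons size_cat IHs //; last exact: path_sorted b_s.
by rewrite /factor /desc_weight -cat1s !size_cat !size_run !big_cons /=; lia.
Qed.

Lemma wordI_val p : 0 < p <= n -> w p = canon_val n I p.
Proof.
elim/even_seq_ind: I I_sorted I_range I_even p => //.
  by move=> _ _ _ p Hp; rewrite /canon_val /=; lia.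
move=> a b s IHs /andP [Hab b_s] /and3P [Ha Hb s_range].
rewrite [odd _]/= negbK => s_even p Hp.
rewrite wordI_cons wprod_cat IHs //; last exact: path_sorted b_s.
by apply: wprod_factor_canon_val => //=; rewrite ?Ha ?Hb //; lia.
Qed.

Lemma signed_perm_wordI : signed_perm n w.
Proof. exact: signed_perm_wprod word_over_wordI. Qed.

Lemma desc_set_is_wordI : desc_set_is n w I.
Proof.
move=> p Hp; rewrite wordI_val // /canon_val.
have I_pos : all (fun x => 0 < x) I by apply/allP => x /(allP I_range); lia.
by have := count_lt_le p I_sorted I_pos; case: ifP; lia.
Qed.

Lemma wordI_minimal x : word_over n x -> desc_set_is n (wprod n x) I ->
  size (wordI n I) <= size x /\ (size x = size (wordI n I) -> eqW n (wprod n x) w).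
Proof.
move=> x_over x_desc; have x_perm := signed_perm_wprod Hn x_over.
have x_ge := inv_count_ge x_perm x_desc I_uniq I_range.
have x_le := inv_count_wprod Hn x_over.
rewrite size_wordI; split=> [|size_x]; first lia.
have w_le : inv_count n w <= desc_weight n I.
  by rewrite -size_wordI; exact: inv_count_wprod word_over_wordI.
apply: (eqW_of_signed_perm x_perm signed_perm_wordI) => p Hp.
have [x_range _ _] := x_perm; have [w_range _ _] := signed_perm_wordI.
apply: key_inj; [apply: x_range; lia | apply: w_range; lia |].
rewrite (key_u_canon x_perm x_desc I_uniq I_range _ Hp); last lia.
by rewrite (key_u_canon signed_perm_wordI desc_set_is_wordI I_uniq I_range w_le Hp).
Qed.

Lemma wordI_length_minimal u k : desc_set_is n u I -> has_length n u k ->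
  size (wordI n I) <= k /\ (k = size (wordI n I) -> eqW n u w).
Proof.
move=> u_desc [[x [x_over x_eq] <-{k}] _].
have x_desc : desc_set_is n (wprod n x) I by move=> i Hi; rewrite x_eq ?u_desc //; lia.
have [size_le eq_w] := wordI_minimal x_over x_desc; split=> // /eq_w x_w j Hj.
by rewrite -x_eq ?x_w.
Qed.

Lemma reduced_wordI : reduced n (wordI n I).
Proof.
split; first exact: word_over_wordI.
split; first by exists (wordI n I) => //; split; [exact: word_over_wordI |].
move=> x [x_over x_eq]; apply: (proj1 (wordI_minimal x_over _)).
by move=> i Hi; rewrite x_eq ?desc_set_is_wordI //; lia.
Qed.

End CanonicalElement.

Lemma inW_of_signed_perm n u I : signed_perm n u -> desc_set_is n u I ->
  uniq I -> all (fun i => 0 < i <= n) I -> ~~ odd (size I) -> inW n u.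
Proof.
move=> [u_range u_inj u_flip] u_desc I_uniq I_range I_even; split=> //.
- move=> i Hi; have -> : n + i = flip n i by rewrite /flip; case: ifP; lia.
  rewrite u_flip; last lia.
  have := u_range i ltac:(lia); rewrite /flip; case: ifP => Hle Hui; first by rewrite addnC.
  by rewrite (_ : n + _ = (u i - n) + n.*2) ?modnDr //; lia.
- rewrite (@eq_in_count _ _ (fun i => i \in I)); last first.
    by move=> i; rewrite mem_iota => Hi; apply: u_desc; lia.
  by rewrite -size_filter (perm_size (perm_filter_iota I_uniq I_range)).
Qed.

Lemma word_over_pred n v : word_over n.-1 v -> word_over n v.
Proof. by move/allP=> v_over; apply/allP => x /v_over; lia. Qed.

Lemma wprod_parabolic_gt n v j : 1 < n -> word_over n.-1 v -> 0 < j <= n.*2 ->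
  (n < wprod n v j) = (n < j).
Proof.
move=> Hn; elim: v => [|a v IHv] //= /andP [Ha v_over] Hj.
have [v_range _ _] := signed_perm_wprod Hn (word_over_pred v_over).
have := v_range j Hj; rewrite -(IHv v_over Hj).
move: (wprod n v j) => z Hz; rewrite /sgen ifT; last lia.
by rewrite /= /swap; apply/idP/idP; repeat case_if; lia.
Qed.

Lemma nth_sorted_gt (s : seq nat) b k : sorted ltn s -> all (fun x => b < x) s ->
  k < size s -> b + k < nth 0 s k.
Proof.
elim: s b k => [|a s IHs] b [|k] //= a_s /andP [Ha s_gt] Hk; first lia.
have := IHs a k (path_sorted a_s) (order_path_min ltn_trans a_s) ltac:(lia); lia.
Qed.

Lemma run_subseq a b b' : b' <= b -> subseq (run a b) (run a b').
Proof.
move=> le_b'b; rewrite /run subseq_rev.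
case: (leqP b a.+1) => Hb; last by rewrite (_ : a.+1 - b = 0) ?sub0seq //; lia.
have -> : a.+1 - b' = (b - b') + (a.+1 - b) by lia.
by rewrite iotaD (_ : b' + (b - b') = b) ?suffix_subseq //; lia.
Qed.

Lemma subseq_flatten_map (T : eqType) (s : seq nat) (f g : nat -> seq T) :
  {in s, forall m, subseq (f m) (g m)} ->
  subseq (flatten (map f s)) (flatten (map g s)).
Proof.
elim: s => [|a s IHs] //= fg_sub; apply: cat_subseq; first by apply: fg_sub; rewrite mem_head.
by apply: IHs => m Hm; apply: fg_sub; rewrite inE Hm orbT.
Qed.

Lemma factorI_subseq_groupD n I m : sorted ltn I -> all (fun i => 0 < i <= n) I ->
  0 < m <= (size I)./2 -> subseq (factorI n I m) (groupD n m).
Proof.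
move=> I_sorted I_range /andP [Hm]; rewrite geq_half_double => le_m_size.
have I_pos : all (fun x => 0 < x) I by apply/allP => x /(allP I_range); lia.
rewrite /factorI /groupD /= eqxx; apply: cat_subseq; apply: run_subseq; rewrite /iI.
- by have := nth_sorted_gt (k := (m.*2 - 1).-1) I_sorted I_pos; lia.
- by have := nth_sorted_gt (k := (m.*2).-1) I_sorted I_pos; lia.
Qed.

Lemma wordI_subseq_longword n I : sorted ltn I -> all (fun i => 0 < i <= n) I ->
  subseq (wordI n I) (longword n).
Proof.
move=> I_sorted I_range; rewrite /wordI /longword.
have le_size : size I <= n.
  rewrite -(size_iota 1 n); apply: uniq_leq_size => [|x Hx].
    by rewrite (sorted_uniq ltn_trans ltnn).
  by rewrite mem_iota; move/allP: I_range => /(_ x Hx); lia.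
have -> : n./2 = (size I)./2 + (n./2 - (size I)./2) by have := half_leq le_size; lia.
rewrite iotaD map_cat flatten_cat -[X in subseq X _]cats0 cat_subseq ?sub0seq //.
apply: subseq_flatten_map => m; rewrite mem_iota => Hm.
by apply: factorI_subseq_groupD => //; lia.
Qed.

Theorem lemma4 (n : nat) (I : seq nat) :
  2 <= n ->
  sorted ltn I -> all (fun i => 0 < i <= n) I -> ~~ odd (size I) ->
  [/\ inW n (wprod n (wordI n I)),
      desc_set_is n (wprod n (wordI n I)) I,
      reduced n (wordI n I)
    & [/\ (forall u, inW n u -> desc_set_is n u I ->
         forall k, has_length n u k ->
           size (wordI n I) <= k /\
           (k = size (wordI n I) -> eqW n u (wprod n (wordI n I)))),
      (forall v, word_over n.-1 v ->
         forall k, has_length n (wprod n v \o wprod n (wordI n I)) k ->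
           size (wordI n I) <= k /\
           (k = size (wordI n I) ->
              eqW n (wprod n v \o wprod n (wordI n I)) (wprod n (wordI n I)))),
      (forall m, 0 < m <= (size I)./2 -> subseq (factorI n I m) (groupD n m))
    & subseq (wordI n I) (longword n)]].
Proof.
move=> Hn I_sorted I_range I_even.
have w_desc := desc_set_is_wordI Hn I_sorted I_range I_even.
have w_perm := signed_perm_wordI Hn I_sorted I_range I_even.
have w_min := wordI_length_minimal Hn I_sorted I_range I_even.
split.
- have I_uniq : uniq I by rewrite (sorted_uniq ltn_trans ltnn).
  exact: inW_of_signed_perm w_perm w_desc I_uniq I_range I_even.
- exact: w_desc.
- exact: reduced_wordI.
split.
- by move=> u _ u_desc k; exact: w_min.
- move=> v v_over k; apply: w_min => i Hi /=.
  have [w_range _ _] := w_perm.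
  by rewrite wprod_parabolic_gt ?w_desc ?w_range //; lia.
- by move=> m; exact: factorI_subseq_groupD.
- exact: wordI_subseq_longword.
Qed.
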